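(* Let $T$ be a parity decision tree on $\{-1,1\}^n$ and let $T'$ be any refinement of $T$. Then $$\mathbf{E}_{\ell\in T}\Big(\sum_{i=1}^n\ell_i\Big)^2\le \mathbf{E}_{\ell'\in T'}\Big(\sum_{i=1}^n\ell'_i\Big)^2.$$
   Context: A parity decision tree on $\{-1,1\}^n$ is a rooted full binary tree whose internal nodes are labelled by subsets $S\subseteq[n]$, whose two outgoing edges are labelled $-1$ and $1$; an input $x$ follows from a node labelled $S$ the edge labelled $\prod_{i\in S}x_i$. A refinement of $T$ is a parity decision tree obtained from $T$ by replacing leaves with (parity decision) subtrees. Each leaf is represented as a vector $\ell\in\{-1,0,1\}^n$ with $\ell_i$ the expected value of $x_i$ over uniformly random inputs reaching that leaf; $\mathbf{E}_{\ell\in T}$ is the expectation over the leaf reached by a uniformly random input $x\in\{-1,1\}^n$. *)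

From HB Require Import structures.
From mathcomp Require Import all_boot all_order all_algebra.
Set Implicit Arguments. Unset Strict Implicit. Unset Printing Implicit Defensive.
Import Order.TTheory GRing.Theory Num.Theory.
Local Open Scope ring_scope.

(* Inputs x in {-1,1}^n are encoded as x : {ffun 'I_n -> bool};
   coordinate i has the value  sgnb (x i)  where true encodes -1, false encodes 1. *)
Definition sgnb (R : nzRingType) (b : bool) : R := if b then -1 else 1.

Definition xval (R : nzRingType) n (x : {ffun 'I_n -> bool}) (i : 'I_n) : R :=
  sgnb R (x i).

(* Parity decision tree: internal node labelled by S, with the child followed
   when prod_{i in S} x_i = -1 (first) and = 1 (second). *)
Inductive pdt (n : nat) : Type :=
| Leaf : pdt n
| Node : {set 'I_n} -> pdt n -> pdt n -> pdt n.
Arguments Leaf {n}.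

(* parity of x on S, as a boolean: true iff prod_{i in S} x_i = -1 *)
Definition parity n (S : {set 'I_n}) (x : {ffun 'I_n -> bool}) : bool :=
  odd #|[set i in S | x i]|.

(* the sequence of edge labels (true = -1 edge) followed by x; it identifies
   the leaf reached by x *)
Fixpoint path n (T : pdt n) (x : {ffun 'I_n -> bool}) : seq bool :=
  match T with
  | Leaf => [::]
  | Node A tm tp =>
      let b := parity A x in b :: path (if b then tm else tp) x
  end.

Inductive refines n : pdt n -> pdt n -> Prop :=
| refines_leaf (T' : pdt n) : refines Leaf T'
| refines_node (A : {set 'I_n}) (a b a' b' : pdt n) :
    refines a a' -> refines b b' -> refines (Node A a b) (Node A a' b').

(* the leaf vector ell (in {-1,0,1}^n) of the leaf reached by x:
   ell_i = expected value of y_i over uniform y reaching the same leaf *)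
Definition leafvec (R : fieldType) n (T : pdt n) (x : {ffun 'I_n -> bool})
    (i : 'I_n) : R :=
  (\sum_(y | path T y == path T x) xval R y i) /
  #|[set y | path T y == path T x]|%:R.

(* E_{ell in T} (sum_i ell_i)^2 : expectation over the leaf reached by a
   uniformly random input x *)
Definition Esq (R : fieldType) n (T : pdt n) : R :=
  (\sum_(x : {ffun 'I_n -> bool}) (\sum_(i < n) leafvec R T x i) ^+ 2) /
  (2 ^ n)%:R.

From Pilot Require Import Defs.
From mathcomp Require Import all_boot all_order all_algebra.
From mathcomp Require Import ring.
Import Order.TTheory GRing.Theory Num.Theory.
Local Open Scope ring_scope.

(* The leaf vector of T at x is the average of the input over the leaf of x,
   so sum_i ell_i is the conditional expectation of f(y) = sum_i y_i given the
   leaf.  Conditioning is an orthogonal projection in L^2: if the partition of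
   T' refines that of T, then E_T f = E_T (E_T' f) and the Pythagorean identity
   gives |E_T' f|^2 = |E_T f|^2 + |E_T' f - E_T f|^2 >= |E_T f|^2. *)

Section ClassAverage.
Variables (R : realFieldType) (X : finType) (K : eqType).

Definition avg (k : X -> K) (f : X -> R) (x : X) : R :=
  (\sum_(y | k y == k x) f y) / #|[set y | k y == k x]|%:R.

Lemma class_eq {k : X -> K} {x y : X} :
  k x = k y -> [set z | k z == k x] = [set z | k z == k y].
Proof. by move=> kxy; apply/setP => z; rewrite !inE kxy. Qed.

Lemma card_class_neq0 (k : X -> K) x : #|[set y | k y == k x]|%:R != 0 :> R.
Proof. by rewrite pnatr_eq0 -lt0n; apply/card_gt0P; exists x; rewrite inE. Qed.

Lemma avg_eq (k : X -> K) f x y : k x = k y -> avg k f x = avg k f y.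
Proof.
by move=> kxy; rewrite /avg (class_eq kxy); under eq_bigl => z do rewrite kxy.
Qed.

Lemma sum_mul_avg (k : X -> K) (f u : X -> R) :
  (forall x y, k x = k y -> u x = u y) ->
  \sum_x u x * avg k f x = \sum_x u x * f x.
Proof.
move=> u_const; pose c x : R := #|[set y | k y == k x]|%:R.
transitivity (\sum_y \sum_(x | k x == k y) f y * (u y / c y)).
  rewrite [RHS](exchange_big_dep xpredT) //=; apply: eq_bigr => x _.
  rewrite /avg mulrC -mulrA mulr_suml; apply: eq_big => [y|y /eqP kyx].
    exact: eq_sym.
  by rewrite (u_const _ _ kyx) /c (class_eq kyx) [_^-1 * _]mulrC.
apply: eq_bigr => y _.
rewrite (eq_bigl (fun x => x \in [set x | k x == k y])) => [|x]; last by rewrite inE.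
by rewrite sumr_const -mulr_natr -/(c y) mulrA divfK ?card_class_neq0 // mulrC.
Qed.

Lemma sum_sqr_avg_le (k k' : X -> K) (f : X -> R) :
  (forall x y, k' x = k' y -> k x = k y) ->
  \sum_x avg k f x ^+ 2 <= \sum_x avg k' f x ^+ 2.
Proof.
move=> k'_finer; set h := avg k f; set g := avg k' f.
have h_const x y : k x = k y -> h x = h y by exact: avg_eq.
have hg : \sum_x h x * g x = \sum_x h x * h x.
  rewrite sum_mul_avg; last by move=> x y /k'_finer; exact: h_const.
  by rewrite sum_mul_avg.
have pythagoras :
    \sum_x g x ^+ 2 = \sum_x h x ^+ 2 + \sum_x (g x - h x) ^+ 2.
  have expand x : (g x - h x) ^+ 2 =
      g x ^+ 2 - h x ^+ 2 - 2 * (h x * g x - h x * h x) by ring.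
  rewrite (eq_bigr _ (fun x _ => expand x)) !sumrB -mulr_sumr sumrB hg.
  by rewrite subrr mulr0 subr0 addrC subrK.
by rewrite pythagoras lerDl sumr_ge0 // => x _; exact: sqr_ge0.
Qed.

End ClassAverage.
Arguments avg {R X K}.

Lemma path_refines n (T T' : pdt n) : refines T T' ->
  forall x y, Defs.path T' x = Defs.path T' y -> Defs.path T x = Defs.path T y.
Proof.
elim=> [T0|A a b a' b' _ IHa _ IHb] x y //=.
case=> eq_par eq_path; rewrite eq_par in eq_path *; congr (_ :: _).
by case: (parity A y) eq_path => eq_path; [apply: IHa | apply: IHb].
Qed.

Lemma Esq_avg (R : realFieldType) n (T : pdt n) :
  Esq R T = (\sum_x avg (Defs.path T) (fun y => \sum_(i < n) xval R y i) x ^+ 2)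
            / (2 ^ n)%:R.
Proof.
rewrite /Esq; congr (_ / _); apply: eq_bigr => x _; congr (_ ^+ 2).
by rewrite /leafvec /avg -mulr_suml exchange_big.
Qed.

Theorem proposition3 (R : realFieldType) (n : nat) (T T' : pdt n) :
  refines T T' -> Esq R T <= Esq R T'.
Proof.
move=> T_T'; rewrite !Esq_avg ler_wpM2r ?invr_ge0 ?ler0n //.
by apply: sum_sqr_avg_le; exact: path_refines.
Qed.
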